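(* Let $i,n$ be natural numbers and let $(A,+,\circ)$ be a brace of cardinality $p^n$, where $p$ is a prime with $p>n+1$. Then $p^iA=\{p^ia: a\in A\}$ is an ideal of $A$. Moreover $A^{\circ p^i}=p^iA$, where $A^{\circ p^i}$ is the subgroup of $(A,\circ)$ generated by the elements $a^{\circ p^i}=a\circ a\circ\cdots\circ a$ ($p^i$ factors), $a\in A$.
   Context: A (left) brace is a set $A$ with binary operations $+,\circ$ such that $(A,+)$ is an abelian group, $(A,\circ)$ is a group, and $a\circ(b+c)+a=a\circ b+a\circ c$ for all $a,b,c$. Write $a*b=a\circ b-a-b$. An ideal of a brace $A$ is a subgroup $I$ of $(A,+)$ which is a normal subgroup of $(A,\circ)$ and satisfies $a*x\in I$ for all $a\in A$, $x\in I$; equivalently, an additive subgroup $I$ with $A*I\subseteq I$ and $I*A\subseteq I$. $p^ia$ denotes the $p^i$-fold additive multiple of $a$. *)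

From HB Require Import structures.
From mathcomp Require Import all_boot all_algebra.
Set Implicit Arguments. Unset Strict Implicit. Unset Printing Implicit Defensive.
Import GRing.Theory.
Local Open Scope ring_scope.

Definition is_brace (A : finZmodType) (circ : A -> A -> A) (e : A)
    (cinv : A -> A) : Prop :=
  [/\ (forall a b c, circ a (circ b c) = circ (circ a b) c),
      (forall a, circ e a = a /\ circ a e = a),
      (forall a, circ (cinv a) a = e /\ circ a (cinv a) = e) &
      (forall a b c, circ a (b + c) + a = circ a b + circ a c)].

Definition bstar (A : finZmodType) (circ : A -> A -> A) (a b : A) : A :=
  circ a b - a - b.

Definition is_add_subgroup (A : finZmodType) (I : {set A}) : Prop :=
  0 \in I /\ (forall x y, x \in I -> y \in I -> x - y \in I).

Definition is_circ_subgroup (A : finZmodType) (circ : A -> A -> A) (e : A)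
    (cinv : A -> A) (S : {set A}) : bool :=
  [&& e \in S, [forall x in S, [forall y in S, circ x y \in S]] &
      [forall x in S, cinv x \in S]].

Definition is_circ_normal (A : finZmodType) (circ : A -> A -> A) (e : A)
    (cinv : A -> A) (S : {set A}) : Prop :=
  is_circ_subgroup circ e cinv S /\
  (forall a x, x \in S -> circ (circ a x) (cinv a) \in S).

Definition is_ideal (A : finZmodType) (circ : A -> A -> A) (e : A)
    (cinv : A -> A) (I : {set A}) : Prop :=
  [/\ is_add_subgroup I, is_circ_normal circ e cinv I &
      (forall a x, x \in I -> bstar circ a x \in I)].

Definition circ_gen (A : finZmodType) (circ : A -> A -> A) (e : A)
    (cinv : A -> A) (G : {set A}) : {set A} :=
  [set x | [forall S : {set A},
              (is_circ_subgroup circ e cinv S && (G \subset S)) ==> (x \in S)]].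

Definition circ_pow (A : finZmodType) (circ : A -> A -> A) (e : A)
    (a : A) (m : nat) : A := iter m (circ a) e.

Definition mult_set (A : finZmodType) (m : nat) : {set A} :=
  [set a *+ m | a : A].

From HB Require Import structures.
From mathcomp Require Import all_boot all_algebra all_fingroup.
From mathcomp Require Import pgroup cyclic sylow zify.

(* The circle group (A,o) acts on (A,+) by the automorphisms
   lam_a(x) = a o x - a, and a * x = lam_a(x) - x.  As (A,o) is a p-group,
   counting fixed cosets shows that the series [ann_series]: J_0 = 0,
   J_(k+1) = {x | A * x <= J_k} grows strictly until it reaches A; hence
   J_n = A and every n-fold product a * (a * ... * x) vanishes.  Writing
   s_a x = a * x, the circle powers satisfy lam_(a^m) = (1 + s_a)^m and
   a^m = sum_t C(m, t+1) s_a^t a, so since n < p we get a^(p^i) = p^i (a + r)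
   with r a sum of higher products, and a^p * A lies one p-power deeper than
   a * A.  Writing p^i y as y^(p^i) o p^i r' with r' deeper in the series or
   in the p-adic filtration, induction yields (p^i A) * A <= p^i A, so p^i A
   is an ideal; the same decomposition shows that p^i A is generated by the
   p^i-th circle powers. *)

Set Implicit Arguments. Unset Strict Implicit. Unset Printing Implicit Defensive.
Import GRing.Theory FinRing.Theory.
Local Open Scope ring_scope.

Section AddSubgroup.
Variable A : finZmodType.
Implicit Types (S : {set A}) (x y : A) (m k : nat).

Lemma add_subgroup0 S : is_add_subgroup S -> 0 \in S.
Proof. by case. Qed.

Lemma add_subgroupB S x y : is_add_subgroup S -> x \in S -> y \in S -> x - y \in S.
Proof. by case=> _; apply. Qed.

Lemma add_subgroupN S x : is_add_subgroup S -> x \in S -> - x \in S.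
Proof. by move=> sS Sx; rewrite -sub0r add_subgroupB ?add_subgroup0. Qed.

Lemma add_subgroupD S x y : is_add_subgroup S -> x \in S -> y \in S -> x + y \in S.
Proof. by move=> sS Sx Sy; rewrite -[y]opprK add_subgroupB ?add_subgroupN. Qed.

Lemma add_subgroupMn S x k : is_add_subgroup S -> x \in S -> x *+ k \in S.
Proof.
move=> sS Sx; elim: k => [|k IHk]; first by rewrite mulr0n add_subgroup0.
by rewrite mulrS add_subgroupD.
Qed.

Lemma add_subgroup_sum S (I : Type) (r : seq I) (P : pred I) (F : I -> A) :
  is_add_subgroup S -> (forall i, P i -> F i \in S) -> \sum_(i <- r | P i) F i \in S.
Proof.
move=> sS SF; elim: r => [|i r IHr]; first by rewrite big_nil add_subgroup0.
by rewrite big_cons; case: ifP => // Pi; rewrite add_subgroupD ?SF.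
Qed.

Lemma add_subgroupT : is_add_subgroup [set: A].
Proof. by split=> [|x y _ _]; rewrite inE. Qed.

Lemma mem_mult_set m x : x *+ m \in mult_set A m.
Proof. exact: imset_f. Qed.

Lemma mult_setP m y : reflect (exists x, y = x *+ m) (y \in mult_set A m).
Proof. by apply: (iffP imsetP) => [[x _ ->]|[x ->]]; exists x. Qed.

Lemma mult_set1 x : x \in mult_set A 1.
Proof. by rewrite -[x]mulr1n mem_mult_set. Qed.

Lemma add_subgroup_mult_set m : is_add_subgroup (mult_set A m).
Proof.
split; first by rewrite -(mul0rn _ m) mem_mult_set.
by move=> _ _ /mult_setP[x ->] /mult_setP[y ->]; rewrite -mulrnBl mem_mult_set.
Qed.

Lemma mult_setMn m k x : x \in mult_set A m -> x *+ k \in mult_set A (m * k).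
Proof. by case/mult_setP=> y ->; rewrite -mulrnA mem_mult_set. Qed.

Lemma mulrn_card x : x *+ #|A| = 0.
Proof. by rewrite -zmodXgE -cardsT expg_cardG ?inE. Qed.

End AddSubgroup.

Section IterBinomial.
Variables (V : zmodType) (f : V -> V).
Hypothesis fD : {morph f : u v / u + v}.

Let f0 : f 0 = 0.
Proof. by apply: (addrI (f 0)); rewrite -fD !addr0. Qed.

Let fMn u k : f (u *+ k) = f u *+ k.
Proof. by elim: k => [|k IHk]; rewrite ?mulr0n ?f0 // !mulrS fD IHk. Qed.

Let f_sum m (F : nat -> V) : f (\sum_(0 <= t < m) F t) = \sum_(0 <= t < m) f (F t).
Proof. exact: big_morph. Qed.

Lemma iter_add_binomial m v :
  iter m (fun w => w + f w) v = \sum_(0 <= t < m.+1) iter t f v *+ 'C(m, t).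
Proof.
elim: m => [|m IHm]; first by rewrite big_nat1 mulr1n.
rewrite iterS IHm f_sum big_nat_recl // [in RHS]big_nat_recl // !bin0 !mulr1n.
under [X in _ + X = _]eq_bigr do rewrite fMn.
under [in RHS]eq_bigr do rewrite binS mulrnDr.
rewrite big_split /= [X in _ = _ + (X + _)]big_nat_recr //= bin_small // mulr0n.
by rewrite addr0 addrA.
Qed.

Lemma iter_affine_binomial m v :
  iter m (fun u => v + (u + f u)) 0 = \sum_(0 <= t < m) iter t f v *+ 'C(m, t.+1).
Proof.
elim: m => [|m IHm]; first by rewrite big_geq.
rewrite iterS IHm f_sum.
under [X in _ + (_ + X) = _]eq_bigr do rewrite fMn.
under [in RHS]eq_bigr do rewrite binS mulrnDr.
rewrite big_split /= [X in _ = _ + X]big_nat_recl // bin0 mulr1n.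
rewrite [X in _ = X + _]big_nat_recr //= bin_small // mulr0n addr0.
by rewrite addrCA.
Qed.

End IterBinomial.

Lemma dvdn_bin_coprime m t : coprime m t -> (m %| 'C(m, t))%N.
Proof.
case: t => [|t] cop; first by move: cop; rewrite /coprime gcdn0 => /eqP->.
by rewrite -(Gauss_dvdr _ cop) -mul_bin_diag dvdn_mulr.
Qed.

Lemma pnat_dvdn (p m : nat) : p.-nat m -> (1 < m)%N -> (p %| m)%N.
Proof. by case/p_natP=> [[|k] ->] // _; rewrite expnS dvdn_mulr. Qed.

Lemma proper_chain_pgroup (gT : finGroupType) (G : {group gT})
    (H : nat -> {group gT}) p n :
  prime p -> #|G| = (p ^ n)%N -> (forall k, H k \subset G) ->
  (forall k, H k \subset H k.+1) ->
  (forall k, H k :!=: G -> H k \proper H k.+1) ->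
  H n :=: G.
Proof.
move=> p_pr oG sHG sHHS ltHHS.
suff le_pk_H k : (H k :==: G) || (p ^ k <= #|H k|)%N.
  have /orP[/eqP // | le_pn] := le_pk_H n.
  by apply/eqP; rewrite eqEcard sHG oG.
elim: k => [|k IHk]; first by rewrite expn0 cardG_gt0 orbT.
have [eqHG | neHG] := eqVneq (H k : {set gT}) G.
  by rewrite eqEsubset sHG -eqHG sHHS.
rewrite (negPf neHG) /= in IHk.
have p_idx : p.-nat #|H k.+1 : H k|%g.
  apply: pnat_dvd (dvdn_trans (dvdn_indexg _ _) (cardSg (sHG _))) _.
  by rewrite oG pnatX pnat_id.
have p_dvd_idx : (p %| #|H k.+1 : H k|%g)%N.
  by apply: pnat_dvdn p_idx _; rewrite indexg_gt1; case/andP: (ltHHS k neHG).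
by rewrite -(Lagrange (sHHS k)) expnSr leq_mul ?orbT // dvdn_leq ?indexg_gt0.
Qed.

(* An alias of A that carries the brace axioms, so that (A, circ) can be
   declared a finGroupType. *)
Definition brace_group (A : finZmodType) (circ : A -> A -> A) (e : A)
  (cinv : A -> A) (hB : is_brace circ e cinv) : Type := A.

Section BraceGroup.
Variables (A : finZmodType) (circ : A -> A -> A) (e : A) (cinv : A -> A).
Variable hB : is_brace circ e cinv.

Lemma brace_circA : associative (circ : brace_group hB -> _ -> _).
Proof. by have [] := hB. Qed.

Lemma brace_circ1 : left_id (e : brace_group hB) circ.
Proof. by have [_ H _ _] := hB; move=> a; case: (H a). Qed.

Lemma brace_circV : left_inverse (e : brace_group hB) cinv circ.
Proof. by have [_ _ H _] := hB; move=> a; case: (H a). Qed.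

End BraceGroup.

HB.instance Definition _ A circ e cinv hB :=
  Finite.copy (@brace_group A circ e cinv hB) A.
HB.instance Definition _ A circ e cinv hB :=
  Finite_isGroup.Build (@brace_group A circ e cinv hB)
    (@brace_circA A circ e cinv hB) (@brace_circ1 A circ e cinv hB)
    (@brace_circV A circ e cinv hB).

Section Brace.
Variables (A : finZmodType) (circ : A -> A -> A) (e : A) (cinv : A -> A).
Hypothesis hB : is_brace circ e cinv.
Implicit Types (a b c x y z w : A) (S W : {set A}).

Local Notation star := (bstar circ).
Local Notation pow := (circ_pow circ e).

Lemma circA a b c : circ a (circ b c) = circ (circ a b) c.
Proof. by case: hB. Qed.

Lemma circ1 a : circ e a = a.
Proof. by case: hB => _ H _ _; case: (H a). Qed.

Lemma circ1r a : circ a e = a.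
Proof. by case: hB => _ H _ _; case: (H a). Qed.

Lemma circV a : circ (cinv a) a = e.
Proof. by case: hB => _ _ H _; case: (H a). Qed.

Lemma circVr a : circ a (cinv a) = e.
Proof. by case: hB => _ _ H _; case: (H a). Qed.

Lemma circDr a b c : circ a (b + c) + a = circ a b + circ a c.
Proof. by case: hB. Qed.

Lemma circ0r a : circ a 0 = a.
Proof. by apply: (addrI (circ a 0)); rewrite -circDr !addr0. Qed.

Lemma brace_e0 : e = 0.
Proof. by rewrite -(circ1 0) circ0r. Qed.

Lemma cinv_uniq a b : circ a b = e -> cinv a = b.
Proof. by move=> ab; rewrite -[cinv a]circ1r -ab circA circV circ1. Qed.

Lemma cinvK a : cinv (cinv a) = a.
Proof. exact/cinv_uniq/circV. Qed.

Lemma cinv_circ a b : cinv (circ a b) = circ (cinv b) (cinv a).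
Proof. by apply: cinv_uniq; rewrite -circA (circA b) circVr circ1 circVr. Qed.

Definition lam a x := circ a x - a.

Lemma circE a x : circ a x = a + lam a x.
Proof. by rewrite addrC subrK. Qed.

Lemma lamD a : {morph lam a : x y / x + y}.
Proof. by move=> x y; rewrite /lam -[circ a _](addrK a) circDr addrACA addrA. Qed.

Lemma lam0 a : lam a 0 = 0.
Proof. by rewrite /lam circ0r subrr. Qed.

Lemma lamN a x : lam a (- x) = - lam a x.
Proof. by apply/eqP; rewrite -subr_eq0 opprK -lamD addNr lam0. Qed.

Lemma lamMn a x k : lam a (x *+ k) = lam a x *+ k.
Proof. by elim: k => [|k IHk]; rewrite ?mulr0n ?lam0 // !mulrS lamD IHk. Qed.

Lemma lam_circ a b x : lam (circ a b) x = lam a (lam b x).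
Proof. by rewrite [lam b x]/lam lamD lamN /lam -circA opprB addrA subrK. Qed.

Lemma lam_e x : lam e x = x.
Proof. by rewrite /lam circ1 brace_e0 subr0. Qed.

Lemma lamK a : cancel (lam a) (lam (cinv a)).
Proof. by move=> x; rewrite -lam_circ circV lam_e. Qed.

Lemma lamVK a : cancel (lam (cinv a)) (lam a).
Proof. by move=> x; rewrite -lam_circ circVr lam_e. Qed.

Lemma addr_circ a x : a + x = circ a (lam (cinv a) x).
Proof. by rewrite circE lamVK. Qed.

Lemma starE a x : star a x = lam a x - x.
Proof. by []. Qed.

Lemma lamE a x : lam a x = x + star a x.
Proof. by rewrite starE addrC subrK. Qed.

Lemma starD a : {morph star a : x y / x + y}.
Proof. by move=> x y; rewrite !starE lamD opprD addrACA. Qed.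

Lemma star0 a : star a 0 = 0.
Proof. by rewrite starE lam0 subrr. Qed.

Lemma starN a x : star a (- x) = - star a x.
Proof. by rewrite !starE lamN [RHS]opprB opprK addrC. Qed.

Lemma starMn a x k : star a (x *+ k) = star a x *+ k.
Proof. by elim: k => [|k IHk]; rewrite ?mulr0n ?star0 // !mulrS starD IHk. Qed.

Lemma star0l x : star 0 x = 0.
Proof. by rewrite starE -[in lam 0 x]brace_e0 lam_e subrr. Qed.

Lemma star_circ a b x : star (circ a b) x = lam a (star b x) + star a x.
Proof. by rewrite !starE lam_circ lamD lamN addrA subrK. Qed.

Lemma star_lam c a x : star c (lam a x) = star (circ c a) x - star a x.
Proof. by rewrite !starE lam_circ [in RHS]opprB addrA subrK. Qed.

Lemma lam_cinv a : lam a (cinv a) = - a.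
Proof. by apply/eqP; rewrite -addr_eq0 addrC -circE circVr brace_e0. Qed.

Lemma circ_conjE a x : circ (circ a x) (cinv a) = lam a (x + star x (cinv a)).
Proof. by rewrite -circA circE (circE x) (lamE x) !lamD lam_cinv addrCA addNKr. Qed.

Lemma circ_subgroupM S x y :
  is_circ_subgroup circ e cinv S -> x \in S -> y \in S -> circ x y \in S.
Proof. by case/and3P=> _ /forall_inP/(_ x)SM _ Sx Sy; apply: (forall_inP (SM Sx)). Qed.

Lemma circ_subgroup_lam_stable W : is_add_subgroup W ->
  (forall a x, x \in W -> lam a x \in W) -> is_circ_subgroup circ e cinv W.
Proof.
move=> addW lamW; apply/and3P; split.
- by rewrite brace_e0 add_subgroup0.
- by apply/forall_inP=> x Wx; apply/forall_inP=> y Wy; rewrite circE add_subgroupD ?lamW.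
- apply/forall_inP=> x Wx.
  by rewrite -[cinv x](lamK x) lam_cinv lamW ?add_subgroupN.
Qed.

Lemma ideal_star_closed W : is_add_subgroup W ->
  (forall a x, x \in W -> star a x \in W) ->
  (forall x a, x \in W -> star x a \in W) -> is_ideal circ e cinv W.
Proof.
move=> addW starW Wstar.
have lamW a x : x \in W -> lam a x \in W by move=> Wx; rewrite lamE add_subgroupD ?starW.
split=> //; split; first exact: circ_subgroup_lam_stable.
by move=> a x Wx; rewrite circ_conjE; apply/lamW/add_subgroupD/Wstar.
Qed.

Fixpoint ann_series k : {set A} :=
  if k is k'.+1 then [set x | [forall a, star a x \in ann_series k']] else [set 0].

Lemma ann_series0 x : (x \in ann_series 0) = (x == 0).
Proof. exact: in_set1. Qed.

Lemma ann_seriesSP k x :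
  reflect (forall a, star a x \in ann_series k) (x \in ann_series k.+1).
Proof. by rewrite inE; apply: forallP. Qed.

Lemma add_subgroup_ann_series k : is_add_subgroup (ann_series k).
Proof.
elim: k => [|k IHk].
  by split=> [|x y]; rewrite !ann_series0 // => /eqP-> /eqP->; rewrite subr0.
split; first by apply/ann_seriesSP=> a; rewrite star0 add_subgroup0.
move=> x y /ann_seriesSP Jx /ann_seriesSP Jy; apply/ann_seriesSP=> a.
by rewrite starD starN add_subgroupB.
Qed.

Lemma lam_mult_set m a x : x \in mult_set A m -> lam a x \in mult_set A m.
Proof. by case/mult_setP=> y ->; rewrite lamMn mem_mult_set. Qed.

Lemma star_mult_set_r m a x : x \in mult_set A m -> star a x \in mult_set A m.
Proof. by case/mult_setP=> y ->; rewrite starMn mem_mult_set. Qed.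

Lemma star_circ_closed W u w : is_add_subgroup W ->
    (forall a x, x \in W -> lam a x \in W) ->
    (forall x, star u x \in W) -> (forall x, star w x \in W) ->
  forall x, star (circ u w) x \in W.
Proof. by move=> addW lamW uW wW x; rewrite star_circ add_subgroupD ?lamW. Qed.

Lemma iter_starMn a t w m : iter t (star a) (w *+ m) = iter t (star a) w *+ m.
Proof. by elim: t => //= t ->; rewrite starMn. Qed.

Lemma lam_circ_pow y m w : lam (pow y m) w = iter m (lam y) w.
Proof. by elim: m => [|m IHm]; rewrite ?lam_e //= lam_circ IHm. Qed.

Lemma lam_circ_powE y m w :
  lam (pow y m) w = \sum_(0 <= t < m.+1) iter t (star y) w *+ 'C(m, t).
Proof.
rewrite lam_circ_pow -(iter_add_binomial (starD y)).
by apply: eq_iter => x; rewrite lamE.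
Qed.

Lemma circ_powE y m :
  pow y m = \sum_(0 <= t < m) iter t (star y) y *+ 'C(m, t.+1).
Proof.
rewrite -(iter_affine_binomial (starD y)) /circ_pow brace_e0.
by apply: eq_iter => u; rewrite circE lamE.
Qed.

Lemma lam_ann_series k a x : x \in ann_series k -> lam a x \in ann_series k.
Proof.
elim: k x => [|k IHk] x; first by rewrite !ann_series0 => /eqP->; rewrite lam0.
move/ann_seriesSP=> Jx; apply/ann_seriesSP=> c.
by rewrite star_lam; apply: (add_subgroupB (add_subgroup_ann_series k)); apply: Jx.
Qed.

Lemma ann_series_subS k : ann_series k \subset ann_series k.+1.
Proof.
elim: k => [|k IHk]; apply/subsetP=> x.
  by rewrite ann_series0 => /eqP->; apply/ann_seriesSP=> a; rewrite star0 ann_series0.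
by move/ann_seriesSP=> Jx; apply/ann_seriesSP=> a; apply: (subsetP IHk).
Qed.

Lemma ann_series_sub k l : (k <= l)%N -> ann_series k \subset ann_series l.
Proof.
move/subnK <-; elim: (l - k)%N => // d IHd.
exact: subset_trans IHd (ann_series_subS _).
Qed.

Lemma iter_star_ann_series y t k w :
  w \in ann_series k -> iter t (star y) w \in ann_series (k - t).
Proof.
move=> Jw; elim: t => [|t IHt]; first by rewrite subn0.
rewrite subnS iterS; case: (k - t)%N IHt => [|j] /= Jt.
  by move: Jt; rewrite !ann_series0 => /eqP->; rewrite star0.
exact: (ann_seriesSP _ _ Jt).
Qed.

Lemma iter_star_ann_seriesS k w t :
  w \in ann_series k.+1 -> (0 < t)%N -> iter t (star w) w \in ann_series k.
Proof.
move=> Jw t_gt0; apply: subsetP (iter_star_ann_series w t Jw).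
by apply: ann_series_sub; lia.
Qed.

Lemma group_set_ann_series k : group_set (ann_series k).
Proof.
have addJ := add_subgroup_ann_series k.
by apply/group_setP; split=> [|x y Jx Jy]; [apply: add_subgroup0 | apply: add_subgroupD].
Qed.

Canonical ann_group k := Group (group_set_ann_series k).

Local Notation circ_group := (brace_group hB).

(* g acts through lam (cinv g), which makes this a right action. *)
Definition lam_setact (X : {set A}) (g : circ_group) : {set A} := lam (cinv g) @: X.

Lemma lam_setact_is_action : is_action [set: circ_group] lam_setact.
Proof.
split=> [g X Y /imset_inj -> // | X g h _ _]; first exact/can_inj/lamK.
rewrite /lam_setact -imset_comp; apply: eq_imset => x /=.
by rewrite -lam_circ -cinv_circ.
Qed.

Definition lam_setaction := Action lam_setact_is_action.

Lemma lam_rcoset c k b :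
  lam c @: (ann_series k :* b)%g = (ann_series k :* lam c b)%g.
Proof.
apply/eqP; rewrite eqEcard card_imset; last exact/can_inj/lamK.
rewrite !card_rcoset leqnn andbT; apply/subsetP=> _ /imsetP[x Jxb ->].
rewrite mem_rcoset zmodMgE zmodVgE -lamN -lamD.
by move: Jxb; rewrite mem_rcoset zmodMgE zmodVgE; apply: lam_ann_series.
Qed.

Lemma mem_ann_seriesS_rcoset k b :
  (forall c, lam c @: (ann_series k :* b)%g = (ann_series k :* b)%g) ->
  b \in ann_series k.+1.
Proof.
move=> fixJb; apply/ann_seriesSP=> c.
have : lam c b \in (ann_series k :* b)%g by rewrite -(fixJb c) imset_f ?rcoset_refl.
by rewrite mem_rcoset zmodMgE zmodVgE.
Qed.

Section PrimePowerOrder.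
Variables (p n : nat).
Hypotheses (p_pr : prime p) (oA : #|A| = (p ^ n)%N).

Lemma pgroup_brace_group : (p.-group [set: circ_group])%g.
Proof. by rewrite /pgroup cardsT oA pnatX pnat_id. Qed.

Lemma ann_series_proper k :
  ann_series k :!=: [set: A] -> ann_series k \proper ann_series k.+1.
Proof.
move=> JnT; rewrite properE ann_series_subS /=; apply/subsetPn.
pose S := rcosets (ann_series k) [set: A].
pose Fix := ('Fix_(S | lam_setaction)([set: circ_group]))%g.
have actsS : [acts [set: circ_group], on S | lam_setaction].
  apply/subsetP=> g _; rewrite !inE; apply/subsetP=> _ /rcosetsP[b _ ->].
  by rewrite inE /= /lam_setact lam_rcoset; apply/rcosetsP; exists (lam (cinv g) b).
have FixJ : ann_series k \in Fix.
  rewrite in_setI; apply/andP; split.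
    by apply/rcosetsP; exists 1%g; rewrite ?inE ?rcoset1.
  apply/afixP=> g _; rewrite /= /lam_setact.
  by have := lam_rcoset (cinv g) k 1%g; rewrite zmod1gE lam0 -zmod1gE !rcoset1.
have p_dvd_S : (p %| #|S|)%N.
  apply: pnat_dvdn; last by rewrite indexg_gt1 subTset.
  apply: pnat_dvd (dvdn_indexg [set: A]%G (ann_group k)) _.
  by rewrite cardsT oA pnatX pnat_id.
have p_dvd_Fix : (p %| #|Fix|)%N.
  by rewrite /dvdn -(pgroup_fix_mod pgroup_brace_group actsS).
have /card_gt0P[X /setD1P[XnJ /setIP[/rcosetsP[b _ Xb] fixX]]] :
    (0 < #|Fix :\ ann_series k|)%N.
  have Fix_gt0 : (0 < #|Fix|)%N by apply/card_gt0P; exists (ann_series k).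
  have := dvdn_leq Fix_gt0 p_dvd_Fix; rewrite (cardsD1 (ann_series k)) FixJ /=.
  by move=> /(leq_trans (prime_gt1 p_pr)); rewrite add1n ltnS.
exists b.
  apply: mem_ann_seriesS_rcoset => c; rewrite -Xb.
  by have /afixP/(_ (cinv c) (in_setT _)) := fixX; rewrite /= /lam_setact cinvK.
by apply: contraNN XnJ => Jb; rewrite Xb (rcoset_id (G := ann_group k)).
Qed.

Lemma ann_series_full : ann_series n = [set: A].
Proof.
apply: (proper_chain_pgroup (G := [set: A]%G) (H := ann_group) p_pr).
- by rewrite cardsT oA.
- by move=> k; apply: subsetT.
- exact: ann_series_subS.
- exact: ann_series_proper.
Qed.

Lemma iter_star_nil y t w : (n <= t)%N -> iter t (star y) w = 0.
Proof.
rewrite -subn_eq0 => /eqP nt0; apply/eqP.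
by rewrite -ann_series0 -nt0 iter_star_ann_series // ann_series_full inE.
Qed.

Hypothesis lt_np : (n < p)%N.

Lemma circ_pow_pexp W i y : is_add_subgroup W ->
    (forall t, (0 < t)%N -> iter t (star y) y \in W) ->
  exists2 r, r \in W & pow y (p ^ i) = (y + r) *+ p ^ i.
Proof.
move=> addW Wy.
pose c t := ('C(p ^ i, t.+1) %/ p ^ i)%N.
(* Terms with t >= n vanish, and for t < n we have t.+1 < p, so p ^ i
   divides 'C(p ^ i, t.+1). *)
have termE t :
    iter t (star y) y *+ 'C(p ^ i, t.+1) = (iter t (star y) y *+ c t) *+ p ^ i.
  have [lt_tn | le_nt] := ltnP t n; last by rewrite iter_star_nil ?mul0rn.
  rewrite -mulrnA divnK //; apply/dvdn_bin_coprime/coprimeXl.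
  by rewrite prime_coprime // gtnNdvd //; lia.
exists (\sum_(1 <= t < p ^ i) iter t (star y) y *+ c t).
  rewrite big_nat_cond; apply: add_subgroup_sum => // t /andP[/andP[t_gt0 _] _].
  exact/add_subgroupMn/Wy.
rewrite circ_powE (eq_bigr _ (fun t _ => termE t)) sumrMnl.
by rewrite big_ltn ?expn_gt0 ?prime_gt0 // /c bin1 divnn expn_gt0 prime_gt0.
Qed.

Lemma mulrn_pexp_circ W i y : is_add_subgroup W ->
    (forall a x, x \in W -> lam a x \in W) ->
    (forall t, (0 < t)%N -> iter t (star y) y \in W) ->
  exists2 r, r \in W & y *+ p ^ i = circ (pow y (p ^ i)) (r *+ p ^ i).
Proof.
move=> addW lamW Wy; have [r Wr powE] := circ_pow_pexp i addW Wy.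
exists (lam (cinv (pow y (p ^ i))) (- r)); first by rewrite lamW ?add_subgroupN.
by rewrite -lamMn -addr_circ powE mulrnDl mulNrn addrK.
Qed.

Lemma star_circ_pow_p k y : (forall x, star y x \in mult_set A (p ^ k)) ->
  forall x, star (pow y p) x \in mult_set A (p ^ k.+1).
Proof.
move=> yP x; rewrite starE lam_circ_powE big_nat_recl // bin0 mulr1n addrC addKr.
rewrite big_nat_cond; apply: add_subgroup_sum (add_subgroup_mult_set _ _) _.
move=> t /andP[/andP[_ lt_tp] _].
have [lt_t1p | le_pt1] := ltnP t.+1 p; last first.
  rewrite iter_star_nil ?mul0rn; [exact/add_subgroup0/add_subgroup_mult_set | lia].
have dvd_p : (p %| 'C(p, t.+1))%N by apply: prime_dvd_bin.
rewrite -(divnK dvd_p) mulrnA expnSr; apply: mult_setMn.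
exact: add_subgroupMn (add_subgroup_mult_set _ _) (yP _).
Qed.

Lemma star_mulrn_p y x : star (y *+ p) x \in mult_set A p.
Proof.
suff JP k z : z \in ann_series k -> forall x, star (z *+ p) x \in mult_set A p.
  by apply: (JP n); rewrite ann_series_full inE.
elim: k z {x} => [|k IHk] z Jz x.
  move: Jz; rewrite ann_series0 => /eqP->.
  by rewrite mul0rn star0l; exact/add_subgroup0/add_subgroup_mult_set.
have := mulrn_pexp_circ 1 (add_subgroup_ann_series k) (@lam_ann_series k)
  (fun t t_gt0 => iter_star_ann_seriesS Jz t_gt0).
rewrite expn1 => -[r Jr ->].
apply: star_circ_closed (add_subgroup_mult_set _ _) (@lam_mult_set _) _ _ x.
  rewrite -[X in mult_set A X]expn1; apply: (star_circ_pow_p (k := 0)) => w.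
  by rewrite expn0 mult_set1.
exact: IHk Jr.
Qed.

Lemma star_pexp_mulrnS k : (0 < k)%N ->
    (forall s y x, (k <= s)%N -> star (y *+ p ^ s) x \in mult_set A (p ^ k)) ->
  forall s y x, (k < s)%N -> star (y *+ p ^ s) x \in mult_set A (p ^ k.+1).
Proof.
(* Downward induction on s, starting from p ^ s y = 0 for s >= n. *)
move=> k_gt0 IHk s; have [d] := ubnP (n - s); elim: d s => // d IHd s.
rewrite ltnS => le_ns_d y x lt_ks.
have [le_ns | lt_sn] := leqP n s.
  rewrite -(subnK le_ns) expnD mulrnA -oA mulrn_card star0l.
  exact/add_subgroup0/add_subgroup_mult_set.
case: s lt_ks le_ns_d lt_sn => // s lt_ks le_ns_d lt_sn.
pose z := y *+ p ^ s.
have starP w : star z w \in mult_set A (p ^ k) by apply: IHk; lia.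
have iterP t : (0 < t)%N -> iter t (star z) z \in mult_set A (p ^ k * p ^ s).
  by case: t => // t _; rewrite iter_starMn iterS; apply/mult_setMn/starP.
have := mulrn_pexp_circ 1 (add_subgroup_mult_set _ _) (@lam_mult_set _) iterP.
rewrite expn1 => -[r Pr zE].
rewrite expnSr mulrnA -/z zE.
apply: star_circ_closed (add_subgroup_mult_set _ _) (@lam_mult_set _) _ _ x.
  exact: star_circ_pow_p.
have /mult_setP[y' ->] := mult_setMn p Pr.
by rewrite -expnD -expnSr -addnS => w; apply: IHd; lia.
Qed.

Lemma star_pexp_mulrn k s y x :
  (0 < k <= s)%N -> star (y *+ p ^ s) x \in mult_set A (p ^ k).
Proof.
elim: k s y x => // k IHk s y x /andP[_ le_ks].
case: k IHk le_ks => [_ | k IHk] le_ks.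
  by rewrite -(subnK le_ks) expnD expn1 mulrnA star_mulrn_p.
by apply: star_pexp_mulrnS => // s' y' x' le_ks'; apply: IHk; rewrite le_ks'.
Qed.

Lemma star_pexp_mult_set_l i x a :
  x \in mult_set A (p ^ i) -> star x a \in mult_set A (p ^ i).
Proof.
case: i => [_ | i /mult_setP[y ->]]; first by rewrite expn0 mult_set1.
by rewrite star_pexp_mulrn ?leqnn.
Qed.

Lemma ideal_mult_set_pexp i : is_ideal circ e cinv (mult_set A (p ^ i)).
Proof.
apply: ideal_star_closed; first exact: add_subgroup_mult_set.
  by move=> a x; apply: star_mult_set_r.
by move=> x a; apply: star_pexp_mult_set_l.
Qed.

Lemma circ_pow_pexp_mult_set i a : pow a (p ^ i) \in mult_set A (p ^ i).
Proof.
have [r _ ->] := circ_pow_pexp i (@add_subgroupT A)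
  (fun t _ => in_setT (iter t (star a) a)).
exact: mem_mult_set.
Qed.

Lemma circ_subgroup_mulrn_pexp S i : is_circ_subgroup circ e cinv S ->
  (forall a, pow a (p ^ i) \in S) -> forall a, a *+ p ^ i \in S.
Proof.
move=> circS powS a.
suff JP k y : y \in ann_series k -> y *+ p ^ i \in S.
  by apply: (JP n); rewrite ann_series_full inE.
elim: k y => [|k IHk] y Jy.
  by move: Jy; rewrite ann_series0 => /eqP->; rewrite mul0rn -brace_e0; case/and3P: circS.
have [r Jr ->] := mulrn_pexp_circ i (add_subgroup_ann_series k) (@lam_ann_series k)
  (fun t t_gt0 => iter_star_ann_seriesS Jy t_gt0).
by apply: circ_subgroupM; rewrite ?powS ?IHk.
Qed.

Lemma circ_gen_circ_pow_pexp i :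
  circ_gen circ e cinv [set pow a (p ^ i) | a : A] = mult_set A (p ^ i).
Proof.
apply/setP=> x; rewrite inE; apply/forallP/idP => [genx | /mult_setP[a ->] S].
  apply: implyP (genx (mult_set A (p ^ i))) _; apply/andP; split.
    exact: circ_subgroup_lam_stable (add_subgroup_mult_set _ _) (@lam_mult_set _).
  by apply/subsetP=> _ /imsetP[a _ ->]; apply: circ_pow_pexp_mult_set.
apply/implyP=> /andP[circS /subsetP powS].
by apply: circ_subgroup_mulrn_pexp => // b; apply/powS/imset_f.
Qed.

End PrimePowerOrder.
End Brace.

Theorem proposition13 (i n p : nat) (A : finZmodType)
    (circ : A -> A -> A) (e : A) (cinv : A -> A) :
  is_brace circ e cinv -> prime p -> (p > n.+1)%N -> #|A| = (p ^ n)%N ->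
  is_ideal circ e cinv (mult_set A (p ^ i)) /\
  circ_gen circ e cinv [set circ_pow circ e a (p ^ i) | a : A]
    = mult_set A (p ^ i).
Proof.
move=> hB p_pr lt_n1p oA; have lt_np := ltnW lt_n1p.
split; first exact (ideal_mult_set_pexp hB p_pr oA lt_np i).
exact (circ_gen_circ_pow_pexp hB p_pr oA lt_np i).
Qed.
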